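(* Let $k\ge 2$ be an integer, $X$ a locally finite poset and $F$ a field admitting a primitive $(k-1)$-th root of unity. Then $f\in I(X,F)$ satisfies $f^k=f$ if and only if $f=\sigma d\sigma^{-1}$ for some invertible $\sigma\in I(X,F)$ and some diagonal $d\in I(X,F)$ each of whose diagonal entries $d(x,x)$ is either $0$ or a $(k-1)$-th root of unity in $F$.
   Context: $I(X,F)$ is the incidence algebra of the locally finite poset $X$ over $F$: functions $f:X\times X\to F$ vanishing unless $x\le y$, with product $(fg)(x,y)=\sum_{x\le z\le y}f(x,z)g(z,y)$. An element $d$ is diagonal if $d(x,y)=0$ whenever $x\ne y$. *)

From HB Require Import structures.
From mathcomp Require Import all_boot all_order all_algebra.
Set Implicit Arguments. Unset Strict Implicit. Unset Printing Implicit Defensive.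
Import Order.TTheory GRing.Theory.
Local Open Scope ring_scope.

(* A locally finite poset X is presented by a porderType together with, for
   every x y, a duplicate-free enumeration [itv x y] of the interval [x, y]. *)
Definition locally_finite_enum (disp : Order.disp_t) (X : porderType disp)
  (itv : X -> X -> seq X) : Prop :=
  (forall x y z, (z \in itv x y) = (x <= z <= y)%O) /\ (forall x y, uniq (itv x y)).

Section Incidence.
Variables (disp : Order.disp_t) (X : porderType disp) (F : fieldType).
Variable itv : X -> X -> seq X.

Definition incidence (f : X -> X -> F) : Prop :=
  forall x y, ~~ (x <= y)%O -> f x y = 0.

Definition inc_mul (f g : X -> X -> F) : X -> X -> F :=
  fun x y => \sum_(z <- itv x y) f x z * g z y.

Definition inc_one : X -> X -> F := fun x y => (x == y)%:R.

Fixpoint inc_pow (f : X -> X -> F) (n : nat) : X -> X -> F :=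
  match n with
  | 0 => inc_one
  | n'.+1 => inc_mul (inc_pow f n') f
  end.

Definition diagonal (d : X -> X -> F) : Prop :=
  forall x y, x != y -> d x y = 0.

Definition inc_invertible (s : X -> X -> F) : Prop :=
  exists t, incidence t /\ inc_mul s t = inc_one /\ inc_mul t s = inc_one.
End Incidence.
Arguments inc_one {disp X F}.

From mathcomp Require Import all_boot all_order all_algebra.
From Stdlib Require Import FunctionalExtensionality.
Set Implicit Arguments. Unset Strict Implicit. Unset Printing Implicit Defensive.
Import Order.TTheory GRing.Theory.
Local Open Scope ring_scope.

(* If [d] is diagonal with entries [0] or [(k-1)]-th roots of unity then
   [d ^ k = d], and this is preserved by conjugation.  Conversely, if [f ^ k = f]
   then every [lam = f x x] satisfies [lam ^ k = lam].  With [m = k - 1], let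
   row [x] of [tau] be row [x] of [\sum_(i <= m) lam ^ (m - i) * f ^ i - 1] for
   [lam = f x x]; then [tau * f = D * tau] for the diagonal part [D] of [f].
   The diagonal entries of [tau] are [(m + 1) lam ^ m - 1], i.e. [-1] or [m],
   and [m != 0] in [F] because [F] has a primitive [m]-th root of unity.  An
   element with invertible diagonal is invertible, so [f = tau^-1 * D * tau]. *)

Lemma exprS_id_eq (R : idomainType) (x : R) m :
  (x ^+ m.+1 == x) = (x == 0) || (x ^+ m == 1).
Proof. by rewrite -subr_eq0 -{2}[x]mul1r exprSr -mulrBl mulf_eq0 subr_eq0 orbC. Qed.

Lemma sum_geom_shift (R : comPzRingType) (lam : R) (a : nat -> R) m :
  lam ^+ m.+1 = lam -> a m.+1 = a 1%N ->
  \sum_(i < m.+1) lam ^+ (m - i) * a i.+1 - a 1%N =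
  lam * (\sum_(i < m.+1) lam ^+ (m - i) * a i - a 0%N).
Proof.
move=> lamS aS.
rewrite big_ord_recr big_ord_recl /= subnn expr0 mul1r aS addrK subn0.
rewrite mulrBr mulrDr mulrA -exprS lamS addrAC subrr add0r mulr_sumr.
by apply: eq_bigr => i _; rewrite mulrA -exprS subnSK.
Qed.

Section IncidenceAlgebra.
Variables (disp : Order.disp_t) (X : porderType disp) (F : fieldType).
Variable itv : X -> X -> seq X.
Hypothesis lf : locally_finite_enum itv.
Local Notation mul := (inc_mul itv).
Local Notation pow := (inc_pow itv).

Lemma mem_itv x y z : (z \in itv x y) = (x <= z <= y)%O.
Proof. by case: lf. Qed.

Lemma uniq_itv x y : uniq (itv x y).
Proof. by case: lf. Qed.

Lemma itv_nil x y : ~~ (x <= y)%O -> itv x y = [::].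
Proof.
case E: (itv x y) => [|z s] // xNy.
have : z \in itv x y by rewrite E mem_head.
by rewrite mem_itv => /andP[xz zy]; rewrite (le_trans xz zy) in xNy.
Qed.

Lemma left_mem_itv x y : (x <= y)%O -> x \in itv x y.
Proof. by move=> xy; rewrite mem_itv lexx xy. Qed.

Lemma right_mem_itv x y : (x <= y)%O -> y \in itv x y.
Proof. by move=> xy; rewrite mem_itv lexx xy. Qed.

Lemma itv_size_gt0 x y : (x <= y)%O -> (0 < size (itv x y))%N.
Proof. by move/left_mem_itv; case: (itv x y). Qed.

Lemma perm_itv_xx x : perm_eq (itv x x) [:: x].
Proof.
by apply: uniq_perm (uniq_itv x x) _ _ => // z; rewrite mem_itv -eq_le inE eq_sym.
Qed.

Lemma perm_itv_le x y z : z \in itv x y ->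
  perm_eq [seq w <- itv x y | (w <= z)%O] (itv x z).
Proof.
rewrite mem_itv => /andP[_ zy].
apply: uniq_perm; rewrite ?filter_uniq ?uniq_itv // => w.
rewrite mem_filter !mem_itv.
by apply/andP/andP=> [[wz /andP[-> _]] | [-> wz]]; rewrite ?(le_trans wz zy).
Qed.

Lemma perm_itv_ge x y w : w \in itv x y ->
  perm_eq [seq z <- itv x y | (w <= z)%O] (itv w y).
Proof.
rewrite mem_itv => /andP[xw _].
apply: uniq_perm; rewrite ?filter_uniq ?uniq_itv // => z.
rewrite mem_filter !mem_itv.
by apply/andP/andP=> [[wz /andP[_ ->]] | [wz ->]]; rewrite ?(le_trans xw wz).
Qed.

Lemma diagonal_incidence (d : X -> X -> F) : diagonal d -> incidence d.
Proof. by move=> dd x y xNy; apply: dd; apply: contraNneq xNy => ->. Qed.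

Lemma diagonal_one : diagonal (@inc_one _ X F).
Proof. by move=> x y /negbTE; rewrite /inc_one => ->. Qed.

Lemma incidence_one : incidence (@inc_one _ X F).
Proof. exact: diagonal_incidence diagonal_one. Qed.

Lemma incidence_mul (f g : X -> X -> F) : incidence (mul f g).
Proof. by move=> x y /itv_nil; rewrite /inc_mul => ->; rewrite big_nil. Qed.

Lemma incidence_pow (f : X -> X -> F) n : incidence (pow f n).
Proof. by case: n => [|n]; [exact: incidence_one | exact: incidence_mul]. Qed.

Lemma inc_mul_diagl (d g : X -> X -> F) x y : diagonal d -> incidence g ->
  mul d g x y = d x x * g x y.
Proof.
move=> dd ig; have [xy|xNy] := boolP (x <= y)%O; last first.
  by rewrite /inc_mul itv_nil // big_nil ig ?mulr0.
rewrite /inc_mul (bigD1_seq x) ?left_mem_itv ?uniq_itv //= big1 ?addr0 // => z zx.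
by rewrite dd ?mul0r // eq_sym.
Qed.

Lemma inc_mul_diagr (f d : X -> X -> F) x y : diagonal d -> incidence f ->
  mul f d x y = f x y * d y y.
Proof.
move=> dd i_f; have [xy|xNy] := boolP (x <= y)%O; last first.
  by rewrite /inc_mul itv_nil // big_nil i_f ?mul0r.
rewrite /inc_mul (bigD1_seq y) ?right_mem_itv ?uniq_itv //= big1 ?addr0 // => z zy.
by rewrite dd ?mulr0.
Qed.

Lemma inc_mul1f (f : X -> X -> F) : incidence f -> mul inc_one f = f.
Proof.
move=> i_f; do 2!apply: functional_extensionality => ?.
by rewrite (inc_mul_diagl _ _ diagonal_one i_f) /inc_one eqxx mul1r.
Qed.

Lemma inc_mulf1 (f : X -> X -> F) : incidence f -> mul f inc_one = f.
Proof.
move=> i_f; do 2!apply: functional_extensionality => ?.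
by rewrite (inc_mul_diagr _ _ diagonal_one i_f) /inc_one eqxx mulr1.
Qed.

Lemma inc_mulA (f g h : X -> X -> F) : mul (mul f g) h = mul f (mul g h).
Proof.
apply: functional_extensionality => x; apply: functional_extensionality => y.
rewrite /inc_mul.
transitivity (\sum_(z <- itv x y) \sum_(w <- itv x y | (w <= z)%O) f x w * g w z * h z y).
  apply: eq_big_seq => z zI; rewrite mulr_suml -[RHS]big_filter.
  by apply: perm_big; rewrite perm_sym perm_itv_le.
rewrite (exchange_big_dep (P := xpredT) (Q := fun z w => (w <= z)%O) xpredT) //=.
apply: eq_big_seq => w wI.
rewrite mulr_sumr -[LHS]big_filter (perm_big _ (perm_itv_ge wI)).
by apply: eq_bigr => z _; rewrite mulrA.
Qed.

Lemma inc_mul_xx (f g : X -> X -> F) x : mul f g x x = f x x * g x x.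
Proof. by rewrite /inc_mul (perm_big _ (perm_itv_xx x)) big_seq1. Qed.

Lemma inc_pow_xx (f : X -> X -> F) n x : pow f n x x = f x x ^+ n.
Proof.
elim: n => [|n IHn]; first by rewrite /= /inc_one eqxx.
by rewrite /= inc_mul_xx IHn exprSr.
Qed.

Lemma diagonal_pow (d : X -> X -> F) n : diagonal d -> diagonal (pow d n).
Proof.
move=> dd; elim: n => [|n IHn]; first exact: diagonal_one.
move=> x y xy; rewrite -[pow d n.+1]/(mul (pow d n) d).
by rewrite (inc_mul_diagr _ _ dd (incidence_pow d n)) IHn ?mul0r.
Qed.

Lemma diagonal_eq (a b : X -> X -> F) : diagonal a -> diagonal b ->
  (forall x, a x x = b x x) -> a = b.
Proof.
move=> da db ab; apply: functional_extensionality => x.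
apply: functional_extensionality => y.
by have [<-|xy] := eqVneq x y; [exact: ab | rewrite da // db].
Qed.

Lemma inc_pow_conj (s t d : X -> X -> F) n : incidence d -> mul t s = inc_one ->
  pow (mul (mul s d) t) n.+1 = mul (mul s (pow d n.+1)) t.
Proof.
move=> i_d ts; elim: n => [|n IHn].
  change (mul inc_one (mul (mul s d) t) = mul (mul s (mul inc_one d)) t).
  by rewrite (inc_mul1f (incidence_mul _ _)) (inc_mul1f i_d).
change (mul (pow (mul (mul s d) t) n.+1) (mul (mul s d) t) =
        mul (mul s (mul (pow d n.+1) d)) t).
rewrite IHn !inc_mulA -(inc_mulA t s) ts inc_mul1f //.
exact: incidence_mul.
Qed.

Section RightInverse.
Variable s : X -> X -> F.
Hypothesis s_unit_diag : forall x, s x x != 0.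

(* Solving [s * t = 1] entrywise: [t x y] is determined by the [t z y] with
   [x < z <= y], whose intervals [itv z y] are strictly shorter than [itv x y].
   The fuel [n] bounds the length of the interval. *)
Fixpoint inv_fuel (n : nat) (x y : X) : F :=
  if n is n'.+1 then
    if (x <= y)%O then
      (s x x)^-1 * ((x == y)%:R - \sum_(z <- itv x y | z != x) s x z * inv_fuel n' z y)
    else 0
  else 0.

Lemma size_itv_lt x y z : z \in itv x y -> z != x ->
  (size (itv z y) < size (itv x y))%N.
Proof.
rewrite mem_itv => /andP[xz zy] zNx.
have -> : (size (itv z y)).+1 = size (x :: itv z y) by [].
apply: uniq_leq_size.
  rewrite /= uniq_itv andbT mem_itv; apply: contra zNx => /andP[zx _].
  by rewrite eq_le zx xz.
move=> w; rewrite inE !mem_itv => /orP[/eqP -> | /andP[zw ->]].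
  by rewrite lexx (le_trans xz zy).
by rewrite (le_trans xz zw).
Qed.

Lemma inv_fuel_stable n m x y : (size (itv x y) <= n)%N -> (size (itv x y) <= m)%N ->
  inv_fuel n x y = inv_fuel m x y.
Proof.
elim: n m x y => [|n IHn] [|m] x y xyn xym //=; case: ifP => // xy.
- by move: (itv_size_gt0 xy); rewrite ltnNge xyn.
- by move: (itv_size_gt0 xy); rewrite ltnNge xym.
rewrite big_seq_cond [in RHS]big_seq_cond.
rewrite (eq_bigr (fun z => s x z * inv_fuel m z y)) => [//|z /andP[zI zNx]].
by rewrite (IHn m) // -ltnS (leq_trans (size_itv_lt zI zNx)).
Qed.

Definition inc_rinv (x y : X) : F := inv_fuel (size (itv x y)) x y.

Lemma inc_rinvE x y : (x <= y)%O -> inc_rinv x y =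
  (s x x)^-1 * ((x == y)%:R - \sum_(z <- itv x y | z != x) s x z * inc_rinv z y).
Proof.
move=> xy; rewrite /inc_rinv.
case E: (size (itv x y)) => [|n]; first by move: (itv_size_gt0 xy); rewrite E.
rewrite /= xy big_seq_cond [in RHS]big_seq_cond.
rewrite (eq_bigr (fun z => s x z * inv_fuel (size (itv z y)) z y)) => [//|z /andP[zI zNx]].
by rewrite (inv_fuel_stable (m := size (itv z y))) // -ltnS -E size_itv_lt.
Qed.

Lemma incidence_rinv : incidence inc_rinv.
Proof. by move=> x y xNy; rewrite /inc_rinv itv_nil. Qed.

Lemma mul_rinv : mul s inc_rinv = inc_one.
Proof.
apply: functional_extensionality => x; apply: functional_extensionality => y.
have [xy|xNy] := boolP (x <= y)%O; last by rewrite incidence_mul ?incidence_one.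
rewrite /inc_mul (bigD1_seq x) ?left_mem_itv ?uniq_itv //= (inc_rinvE xy).
by rewrite mulrA mulfV // mul1r subrK.
Qed.

Lemma rinv_unit_diag x : inc_rinv x x != 0.
Proof.
rewrite inc_rinvE // eqxx big_seq_cond big_pred0 ?subr0 ?mulr1 ?invr_eq0 // => z.
by rewrite mem_itv -eq_le eq_sym andbN.
Qed.

End RightInverse.

Lemma inc_invertible_unit_diag (s : X -> X -> F) : incidence s ->
  (forall x, s x x != 0) -> inc_invertible itv s.
Proof.
move=> i_s s_diag; set t := inc_rinv s; have t_diag := rinv_unit_diag s_diag.
have s_eq : s = inc_rinv t.
  rewrite -[LHS]inc_mulf1 // -(mul_rinv t_diag) -inc_mulA mul_rinv // inc_mul1f //.
  exact: incidence_rinv.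
exists t; split; first exact: incidence_rinv.
by split; [exact: mul_rinv | rewrite [in mul _ s]s_eq mul_rinv].
Qed.

Lemma inc_pow_diagonal_fix (d : X -> X -> F) n : diagonal d ->
  (forall x, d x x ^+ n = d x x) -> pow d n = d.
Proof.
move=> dd dn; apply: diagonal_eq (diagonal_pow n dd) dd _ => x.
by rewrite inc_pow_xx.
Qed.

Definition diag_part (f : X -> X -> F) : X -> X -> F :=
  fun x y => if x == y then f x x else 0.

Lemma diagonal_diag_part (f : X -> X -> F) : diagonal (diag_part f).
Proof. by move=> x y /negbTE; rewrite /diag_part => ->. Qed.

Definition diagonalizer (m : nat) (f : X -> X -> F) : X -> X -> F :=
  fun x y => \sum_(i < m.+1) f x x ^+ (m - i) * pow f i x y - inc_one x y.

Lemma incidence_diagonalizer m (f : X -> X -> F) : incidence (diagonalizer m f).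
Proof.
move=> x y xNy; rewrite /diagonalizer incidence_one // subr0.
by rewrite big1 // => i _; rewrite incidence_pow // mulr0.
Qed.

Lemma diagonalizer_xx m (f : X -> X -> F) x :
  diagonalizer m f x x = f x x ^+ m *+ m.+1 - 1.
Proof.
rewrite /diagonalizer /inc_one eqxx (eq_bigr (fun _ => f x x ^+ m)) => [|i _].
  by rewrite sumr_const card_ord.
by rewrite inc_pow_xx -exprD subnK // -ltnS.
Qed.

Lemma diagonalizer_unit_diag m (f : X -> X -> F) : (0 < m)%N -> m%:R != 0 :> F ->
  (forall x, f x x = 0 \/ f x x ^+ m = 1) -> forall x, diagonalizer m f x x != 0.
Proof.
move=> m_gt0 m_neq0 f_roots x; rewrite diagonalizer_xx.
case: (f_roots x) => ->; last by rewrite mulrSr addrK.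
by rewrite expr0n gtn_eqF // mul0rn sub0r oppr_eq0 oner_neq0.
Qed.

Lemma diagonalizer_mulr m (f : X -> X -> F) : incidence f -> pow f m.+1 = f ->
  mul (diagonalizer m f) f = mul (diag_part f) (diagonalizer m f).
Proof.
move=> i_f fS; apply: functional_extensionality => x.
apply: functional_extensionality => y.
rewrite (inc_mul_diagl _ _ (diagonal_diag_part f) (incidence_diagonalizer m f)).
rewrite /diag_part eqxx.
have lamS : f x x ^+ m.+1 = f x x by rewrite -inc_pow_xx fS.
have pow1 : pow f 1 = f := inc_mul1f i_f.
rewrite -[RHS](@sum_geom_shift _ (f x x) (fun i => pow f i x y)) //; last first.
  by rewrite fS pow1.
rewrite {1}/inc_mul /diagonalizer.
under eq_bigr do rewrite mulrBl mulr_suml.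
rewrite sumrB exchange_big /=; congr (_ - _).
apply: eq_bigr => i _; rewrite /inc_mul mulr_sumr.
by apply: eq_bigr => z _; rewrite mulrA.
Qed.

End IncidenceAlgebra.

Unset Implicit Arguments.
Set Strict Implicit.

Theorem propositionA4 (k : nat) (disp : Order.disp_t) (X : porderType disp)
  (itv : X -> X -> seq X) (F : fieldType) :
  (2 <= k)%N ->
  locally_finite_enum itv ->
  (exists z : F, (k.-1).-primitive_root z) ->
  forall f : X -> X -> F, incidence f ->
  (inc_pow itv f k = f <->
   exists sigma tau d : X -> X -> F,
     incidence sigma /\ incidence tau /\ incidence d /\
     inc_mul itv sigma tau = inc_one /\
     inc_mul itv tau sigma = inc_one /\
     diagonal d /\ (forall x : X, d x x = 0 \/ (d x x) ^+ (k.-1) = 1) /\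
     f = inc_mul itv (inc_mul itv sigma d) tau).
Proof.
move=> k_ge2 lf [z prim_z] f i_f; case: k k_ge2 prim_z => [//|m] m_gt0 prim_z.
have m_neq0 : m%:R != 0 :> F := prim_root_natf_neq0 prim_z.
split=> [fS | [s [t [d [_ [_ [i_d [_ [ts [d_diag [d_roots ->]]]]]]]]]]].
- have f_roots x : f x x = 0 \/ f x x ^+ m = 1.
    have /eqP := inc_pow_xx lf f m.+1 x; rewrite fS eq_sym exprS_id_eq.
    by case/orP=> /eqP; [left | right].
  have [t [i_t [tau_t t_tau]]] := inc_invertible_unit_diag lf
    (incidence_diagonalizer lf m f) (diagonalizer_unit_diag lf m_gt0 m_neq0 f_roots).
  exists t, (diagonalizer itv m f), (diag_part f).
  do !split=> //.
  + exact: incidence_diagonalizer.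
  + exact/diagonal_incidence/diagonal_diag_part.
  + exact: diagonal_diag_part.
  + by move=> x; rewrite /diag_part eqxx.
  by rewrite (inc_mulA lf) -diagonalizer_mulr // -(inc_mulA lf) t_tau inc_mul1f.
- have d_fix x : d x x ^+ m.+1 = d x x.
    by apply/eqP; rewrite exprS_id_eq; case: (d_roots x) => ->; rewrite eqxx ?orbT.
  by rewrite inc_pow_conj // inc_pow_diagonal_fix.
Qed.
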